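(* Let $\mathcal D$ be an ordered, oriented Descartes configuration whose curvature-center coordinate matrix $M=M_{\mathcal D}$ is an integer matrix, and let $g=\gcd(a_1,a_2,a_3,a_4)$, where $(a_1,a_2,a_3,a_4)^T$ is the first column of $M$ (the signed curvatures). Then the augmented curvature-center coordinate matrix $W_{\mathcal D}$ is an integer matrix if and only if one of the following holds: (i) $g=1$; (ii) $g=2$ and in each row of $M$ the sum of the second and third entries is odd; (iii) $g=4$ and the $4\times2$ matrix formed by the second and third columns of $M$ is congruent modulo $2$ to $\begin{pmatrix}1&0\\1&0\\1&0\\1&0\end{pmatrix}$ or to $\begin{pmatrix}0&1\\0&1\\0&1\\0&1\end{pmatrix}$.
   Context: Circles are taken in $\hat{\mathbb C}=\mathbb R^2\cup\{\infty\}$; lines count as circles. A Descartes configuration is a set of four mutually tangent circles with disjoint interiors; an ordered, oriented one carries an ordering and a total orientation, with signed curvatures $b_i$ (reciprocal radius, negative if the interior is unbounded, $0$ for lines, all reversed for negative orientation). The curvature-center coordinate matrix $M_{\mathcal D}$ is the $4\times 3$ matrix with $i$-th row $(b_i,b_ix_i,b_iy_i)$, $(x_i,y_i)$ the center of the $i$-th circle; the augmented curvature-center coordinate matrix $W_{\mathcal D}$ is the $4\times4$ matrix with $i$-th row $(\bar b_i,b_i,b_ix_i,b_iy_i)$, where $\bar b_i=b_i(x_i^2+y_i^2)-1/b_i$ is the signed curvature of the image of the circle under inversion in the unit circle. For a line the rows are $(0,n_x,n_y)$ and $(2p\cdot n,0,n_x,n_y)$ respectively, with $n$ the unit normal pointing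 into the line's interior half-plane and $p$ any point of the line. *)

From mathcomp Require Import all_boot all_order all_algebra.
From mathcomp Require Import reals.
Set Implicit Arguments. Unset Strict Implicit. Unset Printing Implicit Defensive.
Import Order.TTheory GRing.Theory Num.Theory.
Local Open Scope ring_scope.

Section Circles.
Variable R : realType.

Definition pt := (R * R)%type.
Definition dot (u v : pt) : R := u.1 * v.1 + u.2 * v.2.
Definition psub (u v : pt) : pt := (u.1 - v.1, u.2 - v.2).
Definition sqdist (u v : pt) : R := dot (psub u v) (psub u v).

(* A generalized circle in C^ = R^2 u {oo}, together with a choice of
   interior (an orientation):
   - Circ c r false : circle of center c, radius r, interior the open disk;
   - Circ c r true  : same circle, interior the complement of the closed disk
                      (unbounded interior);
   - Line n p       : the line through p with unit normal n, interior the open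
                      half-plane into which n points. *)
Inductive gcircle :=
| Circ of pt & R & bool
| Line of pt & pt.

Definition valid_gcircle (C : gcircle) : Prop :=
  match C with
  | Circ _ r _ => 0 < r
  | Line n _ => dot n n = 1
  end.

(* points of C^ : None is the point at infinity *)
Definition on_gcircle (C : gcircle) (z : option pt) : Prop :=
  match C, z with
  | Circ c r _, Some w => sqdist w c = r ^+ 2
  | Circ _ _ _, None => False
  | Line n p, Some w => dot (psub w p) n = 0
  | Line _ _, None => True
  end.

Definition in_interior (C : gcircle) (w : pt) : Prop :=
  match C with
  | Circ c r false => sqdist w c < r ^+ 2
  | Circ c r true => r ^+ 2 < sqdist w c
  | Line n p => 0 < dot (psub w p) n
  end.

Definition tangent (C D : gcircle) : Prop :=
  exists! z, on_gcircle C z /\ on_gcircle D z.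

Definition descartes (C : 'I_4 -> gcircle) : Prop :=
  (forall i, valid_gcircle (C i)) /\
  (forall i j, i != j -> tangent (C i) (C j)) /\
  (forall i j, i != j -> forall w, ~ (in_interior (C i) w /\ in_interior (C j) w)).

(* total orientation: eps = false is positive, eps = true negative *)
Definition osign (eps : bool) : R := if eps then -1 else 1.

Definition curv (eps : bool) (C : gcircle) : R :=
  match C with
  | Circ _ r false => osign eps * r^-1
  | Circ _ r true => osign eps * - r^-1
  | Line _ _ => 0
  end.

Definition cc_row (eps : bool) (C : gcircle) (j : nat) : R :=
  match C with
  | Circ c _ _ =>
      let b := curv eps C in
      match j with 0 => b | 1 => b * c.1 | _ => b * c.2 end
  | Line n _ =>
      let n' := (osign eps * n.1, osign eps * n.2) in
      match j with 0 => 0 | 1 => n'.1 | _ => n'.2 end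
  end.

Definition acc_row (eps : bool) (C : gcircle) (j : nat) : R :=
  match C with
  | Circ c _ _ =>
      let b := curv eps C in
      match j with
      | 0 => b * (c.1 ^+ 2 + c.2 ^+ 2) - b^-1
      | 1 => b | 2 => b * c.1 | _ => b * c.2 end
  | Line n p =>
      let n' := (osign eps * n.1, osign eps * n.2) in
      match j with 0 => 2 * dot p n' | 1 => 0 | 2 => n'.1 | _ => n'.2 end
  end.

Definition ccmx (eps : bool) (C : 'I_4 -> gcircle) : 'M[R]_(4, 3) :=
  \matrix_(i < 4, j < 3) cc_row eps (C i) j.

Definition accmx (eps : bool) (C : 'I_4 -> gcircle) : 'M[R]_(4, 4) :=
  \matrix_(i < 4, j < 4) acc_row eps (C i) j.

Definition int_mx m n (A : 'M[R]_(m, n)) : Prop :=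
  exists Z : 'M[int]_(m, n), A = map_mx (fun z : int => z%:~R) Z.

End Circles.

(* Write (a_i, b_i, x_i, y_i) for the i-th row of W, so that (b_i, x_i, y_i) is the
   i-th row of M.  Tangency with disjoint interiors says that the rows of W are unit
   vectors, pairwise at product -1, for a Lorentzian form; in coordinates
   a_i b_i = x_i^2 + y_i^2 - 1 and a_i b_j + a_j b_i = 2 (x_i x_j + y_i y_j + 1).
   Inverting this Gram relation gives the augmented Euclidean Descartes theorem, two of
   whose entries read 2 sum b_i^2 = (sum b_i)^2 and 2 sum a_i b_i - sum a_i sum b_i = -8.
   If the a_i are integers, g therefore divides 8; g = 8 is excluded because the first
   relation makes sum b_i / 8 even, and for g = 2, 4 the row relations force the stated
   parities.  Conversely, put b = g c with gcd(c) = 1: the parity conditions make every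
   a_i c_i and a_i c_j + a_j c_i an integer, hence every a_j c_i^2 = c_i (a_i c_j + a_j c_i)
   - c_j (a_i c_i), and a Bezout combination of the coprime c_i^2 shows a_j is an integer. *)

From mathcomp Require Import all_boot all_order all_algebra.
From mathcomp Require Import reals.
From mathcomp Require Import ring lra zify.
Set Implicit Arguments. Unset Strict Implicit. Unset Printing Implicit Defensive.
Import Order.TTheory GRing.Theory Num.Theory.
Local Open Scope ring_scope.

Lemma forall_ord4 (P : 'I_4 -> Prop) : P 0 -> P 1 -> P 2 -> P 3 -> forall i, P i.
Proof.
move=> P0 P1 P2 P3 [[|[|[|[|n]]]] lt_n4] //.
- by rewrite (_ : Ordinal _ = 0) //; apply: val_inj.
- by rewrite (_ : Ordinal _ = 1) //; apply: val_inj.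
- by rewrite (_ : Ordinal _ = 2) //; apply: val_inj.
- by rewrite (_ : Ordinal _ = 3) //; apply: val_inj.
Qed.

Lemma sum_ord4 (V : nmodType) (F : 'I_4 -> V) : \sum_(i < 4) F i = F 0 + F 1 + F 2 + F 3.
Proof.
rewrite !big_ord_recr big_ord0 /= add0r.
by congr (_ + _ + _ + _); congr F; apply: val_inj.
Qed.

(** * Parities and gcds of integer quadruples *)

Section Parity.
Implicit Types x y : int.

Lemma dvdz2M x y : (2 %| x * y)%Z = (2 %| x)%Z || (2 %| y)%Z.
Proof. by rewrite !dvdzE abszM Euclid_dvdM. Qed.

Lemma int_halfP x : exists s, x = 2 * s \/ x = 2 * s + 1.
Proof. by exists (x %/ 2)%Z; lia. Qed.

Lemma dvdz2_sqrB x : (2 %| x ^+ 2 - x)%Z.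
Proof. have [s [-> | ->]] := int_halfP x; nia. Qed.

Lemma dvdz2_sqrDB1 x y : (2 %| x ^+ 2 + y ^+ 2 - 1)%Z = ~~ (2 %| x + y)%Z.
Proof. have := dvdz2_sqrB x; have := dvdz2_sqrB y; lia. Qed.

Lemma dvdz4_sqrDB1 x y : ~~ (2 %| x)%Z -> (2 %| y)%Z -> x ^+ 2 + y ^+ 2 - 1 \in dvdz 4.
Proof. have [s [-> | ->]] := int_halfP x; have [t [-> | ->]] := int_halfP y; nia. Qed.

Lemma dvdz2_dotB1 x y x' y' : ~~ (2 %| x)%Z -> (2 %| y)%Z ->
  ~~ (2 %| x')%Z -> (2 %| y')%Z -> (2 %| x * x' + y * y' + 1)%Z.
Proof.
have [s [-> | ->]] := int_halfP x; have [t [-> | ->]] := int_halfP y;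
have [s' [-> | ->]] := int_halfP x'; have [t' [-> | ->]] := int_halfP y'; nia.
Qed.

Lemma dvdz2_dot_transfer x0 y0 x y : ~~ (2 %| x0 + y0)%Z -> ~~ (2 %| x + y)%Z ->
  ~~ (2 %| x0 * x + y0 * y)%Z -> (2 %| x)%Z = (2 %| x0)%Z.
Proof.
have [s [-> | ->]] := int_halfP x0; have [t [-> | ->]] := int_halfP y0;
have [s' [-> | ->]] := int_halfP x; have [t' [-> | ->]] := int_halfP y; nia.
Qed.

Lemma parity_pattern (x y : 'I_4 -> int) :
  (forall i, ~~ (2 %| x i + y i)%Z) ->
  (forall i j, i != j -> ~~ (2 %| x i * x j + y i * y j)%Z) ->
  (forall i, x i \notin dvdz 2 /\ y i \in dvdz 2) \/
  (forall i, x i \in dvdz 2 /\ y i \notin dvdz 2).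
Proof.
move=> odd_xy odd_dot.
have Ex i : (x i \in dvdz 2) = (x 0 \in dvdz 2).
  have [-> // | i_neq0] := eqVneq i 0.
  by apply: dvdz2_dot_transfer (odd_xy 0) (odd_xy i) (odd_dot 0 i _); rewrite eq_sym.
have := odd_xy; case: (boolP (x 0 \in dvdz 2)) => x0 odd_xy'; [right | left] => i;
  by have := Ex i; have := odd_xy' i; lia.
Qed.

End Parity.

Definition gcdz4 (b : 'I_4 -> int) : int := gcdz (gcdz (b 0) (b 1)) (gcdz (b 2) (b 3)).

Lemma dvdz_gcdz4 (b : 'I_4 -> int) i : (gcdz4 b %| b i)%Z.
Proof.
move: i; apply: forall_ord4; rewrite /gcdz4.
- exact: dvdz_trans (dvdz_gcdl _ _) (dvdz_gcdl _ _).
- exact: dvdz_trans (dvdz_gcdl _ _) (dvdz_gcdr _ _).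
- exact: dvdz_trans (dvdz_gcdr _ _) (dvdz_gcdl _ _).
- exact: dvdz_trans (dvdz_gcdr _ _) (dvdz_gcdr _ _).
Qed.

Lemma gcdz4Mr (b : 'I_4 -> int) k : gcdz4 (fun i => b i * k) = gcdz4 b * `|k|%:Z.
Proof. by rewrite /gcdz4 -!mulz_gcdl. Qed.

Lemma gcdz_sqr m n : gcdz (m ^+ 2) (n ^+ 2) = gcdz m n ^+ 2.
Proof.
have [g0 | g_neq0] := eqVneq (gcdz m n) 0.
  by move/eqP: g0; rewrite gcdz_eq0 => /andP[/eqP-> /eqP->]; rewrite expr0n.
have [m' Dm] := dvdzP (dvdz_gcdl m n); have [n' Dn] := dvdzP (dvdz_gcdr m n).
set g := gcdz m n in g_neq0 Dm Dn *.
have co_mn' : coprimez m' n'.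
  have := mulz_gcdl m' n' g; rewrite -Dm -Dn gez0_abs // => E.
  by apply/eqP/(mulIf g_neq0); rewrite mul1r.
rewrite Dm Dn !exprMn -mulz_gcdl (eqP (coprimezXr _ (coprimezXl _ co_mn'))).
by rewrite mul1r gez0_abs // exprn_ge0.
Qed.

Lemma gcdz4_sqr (b : 'I_4 -> int) : gcdz4 (fun i => b i ^+ 2) = gcdz4 b ^+ 2.
Proof. by rewrite /gcdz4 !gcdz_sqr. Qed.

Definition descartes_pairing (V : comPzRingType) (u v : 'I_4 -> V) : V :=
  2 * (\sum_i u i * v i) - (\sum_i u i) * (\sum_i v i).

Lemma descartes_pairingC (V : comPzRingType) (u v : 'I_4 -> V) :
  descartes_pairing u v = descartes_pairing v u.
Proof. by rewrite /descartes_pairing !sum_ord4; ring. Qed.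

Lemma eq_descartes_pairing (V : comPzRingType) (u u' v v' : 'I_4 -> V) :
  u =1 u' -> v =1 v' -> descartes_pairing u v = descartes_pairing u' v'.
Proof. by move=> Eu Ev; rewrite /descartes_pairing !sum_ord4 !Eu !Ev. Qed.

Lemma descartes_pairingMr (V : comPzRingType) (u v v' : 'I_4 -> V) k :
  (forall i, v i = v' i * k) -> descartes_pairing u v = descartes_pairing u v' * k.
Proof. by move=> Dv; rewrite /descartes_pairing !sum_ord4 !Dv; ring. Qed.

Lemma dvdz2_sum_of_isotropic (v : 'I_4 -> int) :
  descartes_pairing v v = 0 -> (2 %| \sum_i v i)%Z.
Proof.
rewrite /descartes_pairing => /eqP; rewrite subr_eq0 => /eqP E.
by have := dvdz2M (\sum_i v i) (\sum_i v i); rewrite -E dvdz_mulr // orbb.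
Qed.

Lemma dvdz2_pairing (u v : 'I_4 -> int) :
  (2 %| \sum_i v i)%Z -> (2 %| descartes_pairing u v)%Z.
Proof. by move=> ev; apply: rpredB; [apply: dvdz_mulr | apply: dvdz_mull]. Qed.

Definition gcd_parity_condition (g : int) (x y : 'I_4 -> int) : Prop :=
  [\/ g = 1,
      g = 2 /\ (forall i, x i + y i \notin dvdz 2)
    | g = 4 /\
      ((forall i, x i \notin dvdz 2 /\ y i \in dvdz 2) \/
       (forall i, x i \in dvdz 2 /\ y i \notin dvdz 2))].

Lemma gcd_parity_of_int (a b x y : 'I_4 -> int) :
  (forall i, a i * b i = x i ^+ 2 + y i ^+ 2 - 1) ->
  (forall i j, i != j -> a i * b j + a j * b i = 2 * (x i * x j + y i * y j + 1)) ->
  descartes_pairing a b = -8 -> descartes_pairing b b = 0 ->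
  gcd_parity_condition (gcdz4 b) x y.
Proof.
move=> Dab Dpair Pab Pbb.
have [b' Db] : exists b', forall i, b i = b' i * gcdz4 b.
  by exists (fun i => (b i %/ gcdz4 b)%Z) => i; rewrite divzK ?dvdz_gcdz4.
have Pab' := descartes_pairingMr a Db; rewrite Pab in Pab'.
have g_dvd8 : (gcdz4 b %| 8)%Z.
  by apply/dvdzP; exists (- descartes_pairing a b'); rewrite mulNr -Pab' opprK.
have [n Dg] : exists n : nat, gcdz4 b = n%:Z by exists `|gcdz4 b|%N; rewrite gez0_abs.
move: g_dvd8; rewrite Dg in Db Pab' * => /[!dvdzE] /=; rewrite dvdn_divisors //.
have dvd_sqr i : (n%:Z %| x i ^+ 2 + y i ^+ 2 - 1)%Z.
  by rewrite -Dab Db mulrA dvdz_mull.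
have dvd_dot i j : i != j -> (n%:Z %| 2 * (x i * x j + y i * y j + 1))%Z.
  by move=> ij; rewrite -Dpair // !Db !mulrA rpredD ?dvdz_mull.
have -> : divisors 8 = [:: 1; 2; 4; 8]%N by [].
rewrite !inE => /or4P[] /eqP Dn; rewrite {n}Dn in Dg Db Pab' dvd_sqr dvd_dot *.
- by apply: Or31.
- by apply: Or32; split=> // i; rewrite -dvdz2_sqrDB1.
- apply: Or33; split=> //; apply: parity_pattern => [i | i j ij].
    by rewrite -dvdz2_sqrDB1; apply: dvdz_trans (dvd_sqr i).
  by have := dvd_dot i j ij; rewrite [4%Z](_ : _ = 2 * 2) // dvdz_mul2l //; lia.
- have Pbb' : descartes_pairing b' b' = 0.
    move: Pbb; rewrite (descartes_pairingMr b Db) descartes_pairingC.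
    by rewrite (descartes_pairingMr b' Db); lia.
  by have := dvdz2_pairing a (dvdz2_sum_of_isotropic Pbb'); lia.
Qed.

(** * Integrality of the first column *)

Section IntegralityCriterion.
Variable R : archiNumDomainType.
Implicit Types a : R.

Lemma int_num_mul_gcdz a m n : a * m%:~R \is a Num.int -> a * n%:~R \is a Num.int ->
  a * (gcdz m n)%:~R \is a Num.int.
Proof.
move=> am an; have [u [v <-]] := Bezoutz m n.
rewrite intrD !intrM mulrDr.
by apply: rpredD; rewrite mulrCA; apply: rpredM; rewrite ?intr_int.
Qed.

Lemma int_num_of_coprime (a : 'I_4 -> R) (c : 'I_4 -> int) : gcdz4 c = 1 ->
  (forall i, a i * (c i)%:~R \is a Num.int) ->
  (forall i j, i != j -> a i * (c j)%:~R + a j * (c i)%:~R \is a Num.int) ->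
  forall j, a j \is a Num.int.
Proof.
move=> c_coprime ac_int sym_int j.
have ac2_int i : a j * (c i ^+ 2)%:~R \is a Num.int.
  have [-> | ij] := eqVneq i j.
    by rewrite rmorphXn expr2 mulrA; apply: rpredM; rewrite ?intr_int.
  have -> : a j * (c i ^+ 2)%:~R = (c i)%:~R * (a i * (c j)%:~R + a j * (c i)%:~R)
       - (c j)%:~R * (a i * (c i)%:~R) by rewrite rmorphXn; ring.
  by apply: rpredB; apply: rpredM; rewrite ?intr_int ?sym_int.
have := int_num_mul_gcdz (int_num_mul_gcdz (ac2_int 0) (ac2_int 1))
                         (int_num_mul_gcdz (ac2_int 2) (ac2_int 3)).
by rewrite -/(gcdz4 (fun i => c i ^+ 2)) gcdz4_sqr c_coprime expr1n mulr1.
Qed.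

Lemma int_num_divz a g m : g != 0 -> a * g%:~R = (m * g)%:~R -> a \is a Num.int.
Proof.
move=> g_neq0 Dag; apply/intrP; exists m.
by apply: (mulIf (x := g%:~R)); rewrite ?intr_eq0 // Dag intrM.
Qed.

Lemma int_num_of_dvdz_gcdz4 (a : 'I_4 -> R) (b s : 'I_4 -> int)
    (t : 'I_4 -> 'I_4 -> int) : gcdz4 b != 0 ->
  (forall i, a i * (b i)%:~R = (s i)%:~R) -> (forall i, (gcdz4 b %| s i)%Z) ->
  (forall i j, i != j -> a i * (b j)%:~R + a j * (b i)%:~R = (t i j)%:~R) ->
  (forall i j, i != j -> (gcdz4 b %| t i j)%Z) ->
  forall j, a j \is a Num.int.
Proof.
move=> g_neq0 Ds g_dvd_s Dt g_dvd_t.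
have [c Db] : exists c, forall i, b i = c i * gcdz4 b.
  by exists (fun i => (b i %/ gcdz4 b)%Z) => i; rewrite divzK ?dvdz_gcdz4.
apply: (int_num_of_coprime (c := c)) => [|i|i j ij].
- have := gcdz4Mr c (gcdz4 b); rewrite gez0_abs //.
  set g := gcdz4 b in g_neq0 Db *; rewrite {1}/gcdz4 -!Db -/g => Dg.
  by apply: (mulIf g_neq0); rewrite mul1r.
- have [m Dm] := dvdzP (g_dvd_s i).
  by apply: (int_num_divz (m := m) g_neq0); rewrite -mulrA -intrM -Db Ds Dm.
- have [m Dm] := dvdzP (g_dvd_t i j ij).
  apply: (int_num_divz (m := m) g_neq0).
  by rewrite mulrDl -!mulrA -!intrM -!Db Dt // Dm.
Qed.

Lemma int_num_of_gcd_parity (a : 'I_4 -> R) (b x y : 'I_4 -> int) :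
  (forall i, a i * (b i)%:~R = (x i ^+ 2 + y i ^+ 2 - 1)%:~R) ->
  (forall i j, i != j ->
     a i * (b j)%:~R + a j * (b i)%:~R = (2 * (x i * x j + y i * y j + 1))%:~R) ->
  gcd_parity_condition (gcdz4 b) x y -> forall j, a j \is a Num.int.
Proof.
move=> Ds Dt [g1 | [g2 odd_xy] | [g4 pattern]];
  apply: (int_num_of_dvdz_gcdz4 _ Ds _ Dt); rewrite ?g1 ?g2 ?g4 //.
- by move=> i; rewrite dvdz2_sqrDB1 odd_xy.
- by move=> i j _; apply: dvdz_mulr.
- move=> i; case: pattern => /(_ i) [? ?]; last rewrite (addrC (x i ^+ 2));
    exact: dvdz4_sqrDB1.
- move=> i j _; rewrite (_ : 4 = 2 * 2) // dvdz_mul2l //.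
  case: pattern => pattern; have [? ?] := pattern i; have [? ?] := pattern j;
    [|rewrite (addrC (x i * x j))]; exact: dvdz2_dotB1.
Qed.

Lemma descartes_pairing_intr (u v : 'I_4 -> int) :
  descartes_pairing (fun i => (u i)%:~R : R) (fun i => (v i)%:~R) =
  (descartes_pairing u v)%:~R.
Proof. by rewrite /descartes_pairing !sum_ord4 !(rmorphB, rmorphD, rmorphM) /= rmorph1. Qed.

Lemma int_num_iff_gcd_parity (a : 'I_4 -> R) (b x y : 'I_4 -> int) :
  (forall i, a i * (b i)%:~R = (x i ^+ 2 + y i ^+ 2 - 1)%:~R) ->
  (forall i j, i != j ->
     a i * (b j)%:~R + a j * (b i)%:~R = (2 * (x i * x j + y i * y j + 1))%:~R) ->
  descartes_pairing a (fun i => (b i)%:~R) = -8 -> descartes_pairing b b = 0 ->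
  (forall i, a i \is a Num.int) <-> gcd_parity_condition (gcdz4 b) x y.
Proof.
move=> Ds Dt Pab Pbb; split=> [a_int | ]; last exact: int_num_of_gcd_parity.
pose A i := Num.floor (a i).
have DA i : a i = (A i)%:~R by rewrite floorK ?a_int.
apply: (gcd_parity_of_int (a := A)) => // [i | i j ij |].
- by apply: (@intr_inj R); rewrite intrM -DA Ds.
- by apply: (@intr_inj R); rewrite intrD (intrM _ (A i)) (intrM _ (A j)) -!DA Dt.
- apply: (@intr_inj R); rewrite -descartes_pairing_intr rmorphN rmorph_nat -Pab.
  by rewrite /descartes_pairing !sum_ord4 -!DA.
Qed.
End IntegralityCriterion.

(** * Tangency in coordinates *)

Section Geometry.
Variable R : realType.
Implicit Types (c p z w u v : pt R) (r t : R).

Lemma sqdistE c c' : sqdist c c' = (c.1 - c'.1) ^+ 2 + (c.2 - c'.2) ^+ 2.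
Proof. by rewrite /sqdist /dot /= !expr2. Qed.

Lemma dot_sqr_le u v : dot u v ^+ 2 <= dot u u * dot v v.
Proof.
have -> : dot u u * dot v v = dot u v ^+ 2 + (u.1 * v.2 - u.2 * v.1) ^+ 2.
  by rewrite /dot; ring.
by rewrite lerDl sqr_ge0.
Qed.

Lemma dot_le_mul u v r1 r2 : 0 <= r1 -> 0 <= r2 ->
  dot u u = r1 ^+ 2 -> dot v v = r2 ^+ 2 -> dot u v <= r1 * r2.
Proof.
move=> r1_ge0 r2_ge0 Du Dv; have := dot_sqr_le u v; rewrite Du Dv -exprMn => le_sqr.
apply: le_trans (ler_norm _) _.
by rewrite -ler_sqr ?nnegrE ?normr_ge0 ?mulr_ge0 // real_normK ?num_real.
Qed.

Definition ptshift c t u : pt R := (c.1 + t * u.1, c.2 + t * u.2).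

Lemma sqdist_shift c t u c' :
  sqdist (ptshift c t u) c' = sqdist c c' + 2 * t * dot (psub c c') u + t ^+ 2 * dot u u.
Proof. by rewrite !sqdistE /dot /=; ring. Qed.

Lemma sqdistC c c' : sqdist c c' = sqdist c' c.
Proof. by rewrite !sqdistE; ring. Qed.

Lemma sqdist_shift_self c t u : sqdist (ptshift c t u) c = t ^+ 2 * dot u u.
Proof. by rewrite !sqdistE /dot /=; ring. Qed.

Lemma dot_psub_shift c t u p v :
  dot (psub (ptshift c t u) p) v = dot (psub c p) v + t * dot u v.
Proof. by rewrite /dot /=; ring. Qed.

Lemma disjoint_disks_tangent c1 c2 z r1 r2 : 0 < r1 -> 0 < r2 ->
  sqdist z c1 = r1 ^+ 2 -> sqdist z c2 = r2 ^+ 2 ->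
  (forall w, ~ (sqdist w c1 < r1 ^+ 2 /\ sqdist w c2 < r2 ^+ 2)) ->
  sqdist c1 c2 = (r1 + r2) ^+ 2.
Proof.
move=> r1_gt0 r2_gt0 zc1 zc2 disjoint; apply/eqP; rewrite eq_le; apply/andP; split.
  have := dot_le_mul (ltW r1_gt0) (ltW r2_gt0) (etrans (sqdistC c1 z) zc1) zc2.
  have -> : sqdist c1 c2 = sqdist z c1 + sqdist z c2 + 2 * dot (psub c1 z) (psub z c2).
    by rewrite !sqdistE /dot /=; ring.
  by rewrite zc1 zc2; nra.
rewrite leNgt; apply/negP => lt_d.
have rr_gt0 : 0 < r1 + r2 by rewrite addr_gt0.
pose t := r1 / (r1 + r2).
have t_gt0 : 0 < t by rewrite divr_gt0.
have Dr1 : r1 = t * (r1 + r2) by rewrite divfK ?gt_eqF.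
have Dr2 : r2 = (1 - t) * (r1 + r2) by rewrite mulrBl -Dr1 mul1r addrC addKr.
have t_lt1 : 0 < 1 - t by rewrite -(pmulr_lgt0 _ rr_gt0) -Dr2.
clearbody t.
pose w : pt R := (c1.1 + t * (c2.1 - c1.1), c1.2 + t * (c2.2 - c1.2)).
have [E1 E2] : sqdist w c1 = t ^+ 2 * sqdist c1 c2 /\
               sqdist w c2 = (1 - t) ^+ 2 * sqdist c1 c2.
  by rewrite !sqdistE /=; split; ring.
apply: (disjoint w); rewrite E1 E2 [in r1 ^+ 2]Dr1 [in r2 ^+ 2]Dr2 !exprMn.
by split; rewrite ltr_pM2l ?exprn_gt0.
Qed.

Lemma unit_direction u : exists e, dot e e = 1 /\ dot u e = Num.sqrt (dot u u).
Proof.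
have dot_ge0 : 0 <= dot u u by rewrite /dot -!expr2 addr_ge0 ?sqr_ge0.
have [d0 | d_neq0] := eqVneq (Num.sqrt (dot u u)) 0.
  exists (1, 0); rewrite d0 /dot /= mulr0 addr0 mulr1; split=> //.
  move/eqP: d0; rewrite sqrtr_eq0 /dot -!expr2 => le0.
  have := sqr_ge0 u.1; have := sqr_ge0 u.2 => ? ?.
  by apply/eqP; rewrite -sqrf_eq0; apply/eqP; lra.
exists (u.1 / Num.sqrt (dot u u), u.2 / Num.sqrt (dot u u)).
have := sqr_sqrtr dot_ge0; set s := Num.sqrt _ in d_neq0 *; rewrite /dot /= => sK.
split.
  have -> : u.1 / s * (u.1 / s) + u.2 / s * (u.2 / s) = (u.1 * u.1 + u.2 * u.2) / s ^+ 2.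
    by field.
  by rewrite -sK divff // expf_neq0.
have -> : u.1 * (u.1 / s) + u.2 * (u.2 / s) = (u.1 * u.1 + u.2 * u.2) / s by field.
by rewrite -sK expr2 mulfK.
Qed.

Lemma disk_in_disk_tangent c1 c2 z r1 r2 : 0 < r1 -> 0 < r2 ->
  sqdist z c1 = r1 ^+ 2 -> sqdist z c2 = r2 ^+ 2 ->
  (forall w, ~ (sqdist w c1 < r1 ^+ 2 /\ r2 ^+ 2 < sqdist w c2)) ->
  sqdist c1 c2 = (r1 - r2) ^+ 2.
Proof.
move=> r1_gt0 r2_gt0 zc1 zc2 disjoint.
have [e [e_unit De]] := unit_direction (psub c1 c2).
set d := Num.sqrt _ in De; have d_ge0 : 0 <= d := sqrtr_ge0 _.
have Dd : sqdist c1 c2 = d ^+ 2 by rewrite sqr_sqrtr // /dot -!expr2 addr_ge0 ?sqr_ge0.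
have r2_le : r2 <= r1 + d.
  rewrite -ler_sqr ?nnegrE ?addr_ge0 ?(ltW r1_gt0) ?(ltW r2_gt0) // -zc2.
  have := dot_le_mul (ltW r1_gt0) d_ge0 zc1 Dd.
  have -> : sqdist z c2 = sqdist z c1 + sqdist c1 c2 + 2 * dot (psub z c1) (psub c1 c2).
    by rewrite !sqdistE /dot /=; ring.
  by rewrite zc1 Dd; nra.
have r2_ge : d + r1 <= r2.
  rewrite leNgt; apply/negP => lt_r2.
  have [t [t_gt0 t_lt_r1 r2_lt]] : exists t, [/\ 0 < t, t < r1 & r2 < d + t].
    have [le_r2d | lt_dr2] := lerP r2 d.
      by exists (r1 / 2); split; lra.
    by exists ((r1 + r2 - d) / 2); split; lra.
  apply: (disjoint (ptshift c1 t e)).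
  by rewrite sqdist_shift_self sqdist_shift De e_unit Dd; split; nra.
by rewrite Dd (_ : d = r2 - r1); [rewrite -sqrrN opprB | lra].
Qed.

Lemma exteriors_meet c1 c2 r1 r2 :
  exists w, r1 ^+ 2 < sqdist w c1 /\ r2 ^+ 2 < sqdist w c2.
Proof.
pose K := `|c1.1| + `|c2.1| + `|r1| + `|r2| + 1.
have /ler_normlP[? ?] := lexx `|c1.1|; have /ler_normlP[? ?] := lexx `|c2.1|.
have /ler_normlP[? ?] := lexx `|r1|; have /ler_normlP[? ?] := lexx `|r2|.
have := normr_ge0 c1.1; have := normr_ge0 c2.1 => ? ?.
by exists (K, 0); rewrite !sqdistE /K /=; split; nra.
Qed.

Lemma exterior_halfplane_meet c r n p : dot n n = 1 ->
  exists w, r ^+ 2 < sqdist w c /\ 0 < dot (psub w p) n.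
Proof.
move=> n_unit; pose h := dot (psub c p) n; pose K := `|r| + `|h| + 1.
have /ler_normlP[? ?] := lexx `|r|; have /ler_normlP[? ?] := lexx `|h|.
exists (ptshift c K n); rewrite sqdist_shift_self dot_psub_shift n_unit -/h /K.
split; nra.
Qed.

Lemma disk_halfplane_tangent c r n p z : 0 < r -> dot n n = 1 ->
  sqdist z c = r ^+ 2 -> dot (psub z p) n = 0 ->
  (forall w, ~ (sqdist w c < r ^+ 2 /\ 0 < dot (psub w p) n)) ->
  dot (psub c p) n = - r.
Proof.
move=> r_gt0 n_unit zc zp disjoint; set h := dot (psub c p) n.
have h_sqr : h ^+ 2 <= r ^+ 2.
  have -> : h = dot (psub c z) n by rewrite /h -[RHS]addr0 -zp /dot /=; ring.
  by have := dot_sqr_le (psub c z) n; rewrite n_unit mulr1 -zc sqdistC.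
have [le_h | lt_h] := lerP h (- r); first by nra.
exfalso; apply: (disjoint (ptshift c ((r - h) / 2) n)).
by rewrite sqdist_shift_self dot_psub_shift n_unit -/h; split; nra.
Qed.

Lemma halfplanes_tangent n m p q : dot n n = 1 -> dot m m = 1 ->
  (forall w, ~ (dot (psub w p) n = 0 /\ dot (psub w q) m = 0)) ->
  (forall w, ~ (0 < dot (psub w p) n /\ 0 < dot (psub w q) m)) ->
  dot n m = -1.
Proof.
move=> n_unit m_unit no_meet disjoint.
pose cross := n.1 * m.2 - n.2 * m.1.
have cross0 : cross = 0.
  apply/eqP/negP => /negP cross_neq0.
  pose k1 := dot p n; pose k2 := dot q m.
  apply: (no_meet ((k1 * m.2 - k2 * n.2) / cross, (n.1 * k2 - m.1 * k1) / cross)).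
  by rewrite /dot /= /k1 /k2 /cross /dot; split; field.
have : dot n m ^+ 2 + cross ^+ 2 = dot n n * dot m m by rewrite /dot /cross; ring.
rewrite cross0 n_unit m_unit expr0n addr0 mulr1 => /eqP.
rewrite sqrf_eq1 => /orP[/eqP nm1 | /eqP //].
exfalso; pose h := dot (psub p q) m; pose K := `|h| + 1.
have /ler_normlP[? ?] := lexx `|h|.
apply: (disjoint (ptshift p K n)); rewrite !dot_psub_shift n_unit nm1 -/h /K.
by rewrite /dot /= !subrr !mul0r add0r; split; lra.
Qed.

End Geometry.

(** * The Lorentz form of augmented rows *)

Section LorentzForm.
Variable R : realType.
Implicit Types (c p : pt R) (r : R).

Local Arguments curv : simpl never.

Definition lorentz_form (u v : nat -> R) : R :=
  - (u 0%N * v 1%N + u 1%N * v 0%N) / 2 + u 2%N * v 2%N + u 3%N * v 3%N.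

Lemma lorentz_formC (u v : nat -> R) : lorentz_form u v = lorentz_form v u.
Proof. by rewrite /lorentz_form; ring. Qed.

Lemma osign_sqr eps : osign R eps ^+ 2 = 1.
Proof. by case: eps; rewrite /= ?sqrrN expr1n. Qed.

Lemma osign_neq0 eps : osign R eps != 0.
Proof. by case: eps; rewrite /= ?oppr_eq0 oner_eq0. Qed.

Lemma curv_circ_inv eps c r s :
  (curv eps (Circ c r s))^-1 = osign R eps * (if s then - r else r).
Proof. by case: s; case: eps; rewrite /curv /= ?mul1r ?mulN1r ?opprK ?invrN invrK. Qed.

Lemma curv_circ_neq0 eps c r s : r != 0 -> curv eps (Circ c r s) != 0.
Proof.
move=> r_neq0; rewrite -invr_eq0 curv_circ_inv.
by case: eps; case: s; rewrite /= ?mul1r ?mulN1r ?oppr_eq0.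
Qed.

Lemma lorentz_acc_row_self eps C : valid_gcircle C ->
  lorentz_form (acc_row eps C) (acc_row eps C) = 1.
Proof.
case: C => [c r s r_gt0 | n p n_unit].
  have := curv_circ_neq0 eps c s (lt0r_neq0 r_gt0); set b := curv _ _ => b_neq0.
  by rewrite /lorentz_form /= -/b; field.
rewrite /lorentz_form /= -[RHS]n_unit -[RHS]mul1r -(osign_sqr eps) /dot /=; ring.
Qed.

Lemma lorentz_acc_row_circ eps c1 r1 s1 c2 r2 s2 : r1 != 0 -> r2 != 0 ->
  let b1 := curv eps (Circ c1 r1 s1) in let b2 := curv eps (Circ c2 r2 s2) in
  lorentz_form (acc_row eps (Circ c1 r1 s1)) (acc_row eps (Circ c2 r2 s2)) =
  -1 - b1 * b2 / 2 * (sqdist c1 c2 - (b1^-1 + b2^-1) ^+ 2).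
Proof.
move=> r1_neq0 r2_neq0 b1 b2.
have b1_neq0 : b1 != 0 by apply: curv_circ_neq0.
have b2_neq0 : b2 != 0 by apply: curv_circ_neq0.
by rewrite /lorentz_form /= -/b1 -/b2 sqdistE; field; apply/andP.
Qed.

Lemma lorentz_circ_circ_tangent eps c1 r1 s1 c2 r2 s2 : 0 < r1 -> 0 < r2 ->
  tangent (Circ c1 r1 s1) (Circ c2 r2 s2) ->
  (forall w, ~ (in_interior (Circ c1 r1 s1) w /\ in_interior (Circ c2 r2 s2) w)) ->
  lorentz_form (acc_row eps (Circ c1 r1 s1)) (acc_row eps (Circ c2 r2 s2)) = -1.
Proof.
move=> r1_gt0 r2_gt0 [[z|] [[/= zc1 zc2] _]] // disjoint.
rewrite lorentz_acc_row_circ ?lt0r_neq0 // !curv_circ_inv -mulrDr exprMn osign_sqr mul1r.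
suff -> : sqdist c1 c2 = ((if s1 then - r1 else r1) + (if s2 then - r2 else r2)) ^+ 2.
  by rewrite subrr mulr0 subr0.
case: s1 s2 disjoint zc1 zc2 => [] [] /= disjoint zc1 zc2.
- have [w [? ?]] := exteriors_meet c1 c2 r1 r2; by case: (disjoint w).
- rewrite sqdistC addrC; apply: (disk_in_disk_tangent r2_gt0 r1_gt0 zc2 zc1).
  by move=> w [? ?]; apply: (disjoint w).
- exact: (disk_in_disk_tangent r1_gt0 r2_gt0 zc1 zc2 disjoint).
- exact: (disjoint_disks_tangent r1_gt0 r2_gt0 zc1 zc2 disjoint).
Qed.

Lemma lorentz_circ_line_tangent eps c r s n p : 0 < r -> dot n n = 1 ->
  tangent (Circ c r s) (Line n p) ->
  (forall w, ~ (in_interior (Circ c r s) w /\ in_interior (Line n p) w)) ->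
  lorentz_form (acc_row eps (Circ c r s)) (acc_row eps (Line n p)) = -1.
Proof.
move=> r_gt0 n_unit [[z|] [[/= zc zp] _]] // disjoint.
case: s disjoint => /= disjoint.
  by have [w [? ?]] := exterior_halfplane_meet c r p n_unit; case: (disjoint w).
have r_neq0 : r != 0 by rewrite lt0r_neq0.
have h := disk_halfplane_tangent r_gt0 n_unit zc zp disjoint.
transitivity (osign R eps ^+ 2 * dot (psub c p) n / r).
  by rewrite /lorentz_form /= /curv /dot /=; field; rewrite r_neq0 osign_neq0.
by rewrite osign_sqr mul1r h mulNr divff.
Qed.

Lemma lorentz_line_line_tangent eps n p m q : dot n n = 1 -> dot m m = 1 ->
  tangent (Line n p) (Line m q) ->
  (forall w, ~ (in_interior (Line n p) w /\ in_interior (Line m q) w)) ->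
  lorentz_form (acc_row eps (Line n p)) (acc_row eps (Line m q)) = -1.
Proof.
move=> n_unit m_unit [z [_ unique]] disjoint.
have no_meet w : ~ (dot (psub w p) n = 0 /\ dot (psub w q) m = 0).
  by move=> w_on; have := unique None (conj I I); rewrite (unique (Some w) w_on).
transitivity (osign R eps ^+ 2 * dot n m).
  by rewrite /lorentz_form /= /dot /=; ring.
by rewrite osign_sqr mul1r (halfplanes_tangent n_unit m_unit no_meet disjoint).
Qed.

Lemma lorentz_acc_row_tangent eps C D : valid_gcircle C -> valid_gcircle D ->
  tangent C D -> (forall w, ~ (in_interior C w /\ in_interior D w)) ->
  lorentz_form (acc_row eps C) (acc_row eps D) = -1.
Proof.
case: C => [c r s | n p]; case: D => [c' r' s' | m q] /= C_valid D_valid.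
- exact: lorentz_circ_circ_tangent.
- exact: lorentz_circ_line_tangent.
- move=> [z [[zC zD] unique]] disjoint; rewrite lorentz_formC.
  apply: lorentz_circ_line_tangent => //; last by move=> w [? ?]; apply: (disjoint w).
  by exists z; split=> // z' [? ?]; apply: unique.
- exact: lorentz_line_line_tangent.
Qed.
End LorentzForm.

(** * The augmented Euclidean Descartes theorem *)

Section DescartesForm.
Variable R : numFieldType.

Definition descartes_mx : 'M[R]_4 := \matrix_(i, j) (if i == j then 1 else -1).

Definition lorentz_mx (k : R) : 'M[R]_4 :=
  \matrix_(i, j) if (i + j == 1)%N then k else if (i == j) && (1 < i)%N then 1 else 0.

Lemma lorentz_mxM k k' : k * k' = 1 -> lorentz_mx k *m lorentz_mx k' = 1%:M.
Proof.
move=> kk'; apply/matrixP => i j; rewrite !mxE sum_ord4 !mxE /=.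
by case: i => [[|[|[|[|?]]]] ?]; case: j => [[|[|[|[|?]]]] ?] //=;
  rewrite ?mul0r ?mulr0 ?addr0 ?add0r ?mulr1 ?kk' // mulrC.
Qed.

Lemma descartes_mx_sqr : descartes_mx *m descartes_mx = 4%:M.
Proof.
apply/matrixP => i j; rewrite !mxE sum_ord4 !mxE.
by case: i => [[|[|[|[|?]]]] ?]; case: j => [[|[|[|[|?]]]] ?] //=; ring.
Qed.

(* As [descartes_mx ^+ 2 = 4%:M], the row relation exhibits [Q W^T descartes_mx / 4] as
   an inverse of [W], which turns it into a column relation. *)
Lemma trmx_descartes_form (W Q Q' : 'M[R]_4) : Q' *m Q = 1%:M ->
  W *m Q *m W^T = descartes_mx -> W^T *m descartes_mx *m W = 4 *: Q'.
Proof.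
move=> QQ' DW; set X := Q *m W^T *m descartes_mx.
have four_neq0 : (4 : R) != 0 by rewrite pnatr_eq0.
have : W *m (4^-1 *: X) = 1%:M.
  by rewrite -scalemxAr /X !mulmxA DW descartes_mx_sqr -scalemx1 scalerA mulVf ?scale1r.
move/mulmx1C; rewrite -scalemxAl => XW1.
have XW : X *m W = 4%:M.
  by rewrite -scalemx1 -XW1 scalerA divff // scale1r.
rewrite -[LHS]mul1mx -QQ' -!mulmxA (mulmxA Q) (mulmxA (Q *m _)) -/X XW.
by rewrite mul_mx_scalar.
Qed.

Lemma descartes_mx_formE (A : 'M[R]_4) k l :
  (A^T *m descartes_mx *m A) k l = descartes_pairing (fun i => A i k) (fun i => A i l).
Proof. by rewrite /descartes_pairing !mxE !sum_ord4 !mxE !sum_ord4 !mxE /=; ring. Qed.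
End DescartesForm.

Section AugmentedMatrix.
Variable R : realType.

Lemma lorentz_acc_rows eps (C : 'I_4 -> gcircle R) : descartes C ->
  forall i j, lorentz_form (acc_row eps (C i)) (acc_row eps (C j)) = if i == j then 1 else -1.
Proof.
move=> [valid [tangent disjoint]] i j; case: eqVneq => [<- | ij].
  exact: lorentz_acc_row_self.
exact: lorentz_acc_row_tangent (tangent i j ij) (disjoint i j ij).
Qed.

Lemma accmx_lorentz_mx eps (C : 'I_4 -> gcircle R) :
  accmx eps C *m lorentz_mx (- 2^-1) *m (accmx eps C)^T =
  \matrix_(i, j) lorentz_form (acc_row eps (C i)) (acc_row eps (C j)).
Proof.
apply/matrixP => i j; rewrite !mxE sum_ord4 !mxE !sum_ord4 !mxE /lorentz_form /=.
ring.
Qed.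

(* The augmented Euclidean Descartes theorem [W^T Q_D W = Q_W] of Lagarias, Mallows and
   Wilks, where [descartes_mx = 2 Q_D] and [lorentz_mx (-2) = Q_W / 2]. *)
Theorem augmented_descartes eps (C : 'I_4 -> gcircle R) : descartes C ->
  (accmx eps C)^T *m descartes_mx R *m accmx eps C = 4 *: lorentz_mx (-2).
Proof.
move=> DC; apply: (@trmx_descartes_form _ _ (lorentz_mx (- 2^-1))).
  by apply: lorentz_mxM; rewrite mulrN mulNr opprK divff ?pnatr_eq0.
rewrite accmx_lorentz_mx; apply/matrixP => i j; rewrite !mxE.
exact: lorentz_acc_rows.
Qed.

Lemma int_mxP m n (A : 'M[R]_(m, n)) : int_mx A <-> forall i j, A i j \is a Num.int.
Proof.
split=> [[Z ->] i j | A_int]; first by rewrite mxE intr_int.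
by exists (\matrix_(i, j) Num.floor (A i j)); apply/matrixP => i j; rewrite !mxE floorK.
Qed.

Lemma acc_row_succ eps (D : gcircle R) k : (k < 3)%N -> acc_row eps D k.+1 = cc_row eps D k.
Proof. by case: D => [c r s | n p]; case: k => [|[|[|k]]]. Qed.

Section IntegerCurvatureCenters.
Variables (eps : bool) (C : 'I_4 -> gcircle R) (M : 'M[int]_(4, 3)).
Hypotheses (DC : descartes C) (DM : ccmx eps C = map_mx (fun z : int => z%:~R) M).

Lemma acc_row_intE i (k : 'I_3) : acc_row eps (C i) k.+1 = (M i k)%:~R.
Proof.
by have := congr1 (fun A : 'M[R]_(4, 3) => A i k) DM; rewrite !mxE => <-; apply: acc_row_succ.
Qed.

Let a i := acc_row eps (C i) 0.
Let b i := M i 0.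

Lemma acc_rows_int_relations :
  (forall i, a i * (b i)%:~R = (M i 1 ^+ 2 + M i 2 ^+ 2 - 1)%:~R) /\
  (forall i j, i != j -> a i * (b j)%:~R + a j * (b i)%:~R =
                       (2 * (M i 1 * M j 1 + M i 2 * M j 2 + 1))%:~R).
Proof.
have rows := lorentz_acc_rows eps DC.
have Eb i : acc_row eps (C i) 1 = (b i)%:~R := acc_row_intE i 0.
have Ex i : acc_row eps (C i) 2 = (M i 1)%:~R := acc_row_intE i 1.
have Ey i : acc_row eps (C i) 3 = (M i 2)%:~R := acc_row_intE i 2.
split=> [i | i j ij].
  have := rows i i; rewrite eqxx /lorentz_form Eb Ex Ey -/(a i).
  rewrite !(intrD, intrB, intrM, rmorphXn); lra.
have := rows i j; rewrite (negbTE ij) /lorentz_form !Eb !Ex !Ey -/(a i) -/(a j).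
rewrite !(intrD, intrM); lra.
Qed.

Lemma acc_cols_relations :
  descartes_pairing a (fun i => (b i)%:~R) = -8 /\ descartes_pairing b b = 0.
Proof.
have entry k l := congr1 (fun A : 'M[R]_4 => A k l) (augmented_descartes eps DC).
have col0 : (fun i => accmx eps C i 0) =1 a by move=> i; rewrite mxE.
have col1 : (fun i => accmx eps C i 1) =1 (fun i => (b i)%:~R).
  by move=> i; rewrite mxE; apply: (acc_row_intE i 0).
move: (entry 0 1) (entry 1 1); rewrite /= !descartes_mx_formE !mxE /=.
rewrite (eq_descartes_pairing col0 col1) (eq_descartes_pairing col1 col1).
rewrite descartes_pairing_intr => -> /eqP; rewrite mulr0 intr_eq0 => /eqP ->.
by split=> //; rewrite mulrN -natrM.
Qed.
End IntegerCurvatureCenters.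
End AugmentedMatrix.

Theorem theorem8p2 (R : realType) (C : 'I_4 -> gcircle R) (eps : bool)
    (M : 'M[int]_(4, 3)) :
  descartes C ->
  ccmx eps C = map_mx (fun z : int => z%:~R) M ->
  let g := gcdz (gcdz (M 0 0) (M 1 0)) (gcdz (M 2 0) (M 3 0)) in
  int_mx (accmx eps C) <->
  [\/ g = 1,
      g = 2 /\ (forall i : 'I_4, M i 1 + M i 2 \notin dvdz 2)
    | g = 4 /\
      ((forall i : 'I_4, M i 1 \notin dvdz 2 /\ M i 2 \in dvdz 2) \/
       (forall i : 'I_4, M i 1 \in dvdz 2 /\ M i 2 \notin dvdz 2))].
Proof.
move=> DC DM g.
have [rows_rel pair_rel] := acc_rows_int_relations DC DM.
have [col_rel col_iso] := acc_cols_relations DC DM.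
have a_int_iff := int_num_iff_gcd_parity rows_rel pair_rel col_rel col_iso.
apply: iff_trans (int_mxP _) (iff_trans _ a_int_iff).
split=> [W_int i | a_int i [[|k] lt_k]].
- by have := W_int i 0; rewrite mxE.
- by rewrite mxE; apply: a_int.
- by rewrite mxE (acc_row_intE DM i (Ordinal (lt_k : (k < 3)%N))) intr_int.
Qed.
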